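(* In the fixed-routing setting, let $y=[y_i(k)]_{k\in\mathcal C,\,i\notin\mathcal S_k}\in[0,1]^{n}$, and define $$A(y)=T(\mathbf 0)-\sum_{(i,j)\in\mathcal E}D_{ij}(F_{ij}(y)),\qquad B(y)=\sum_{i\in\mathcal V}B_i(Y_i),$$ where $T(\mathbf 0)=\sum_{(i,j)}D_{ij}(F_{ij}(\mathbf 0))$ is assumed finite. Then $A$ is nonnegative, monotonically nondecreasing and DR-submodular on $[0,1]^n$, and $B$ is convex. Hence maximizing $G(y)=A(y)-B(y)$ over $[0,1]^n$ is a ''DR-submodular + concave'' maximization problem.
   Context: Network model: finite directed graph $(\mathcal V,\mathcal E)$ with symmetric links, finite catalog $\mathcal C$, designated server sets $\mathcal S_k\neq\emptyset$, exogenous request rates $r_v(k)\ge0$; each $D_{ij}$, $B_i$ is twice continuously differentiable, increasing, convex, with value $0$ at $0$; $Y_i=\sum_k y_i(k)$. Fixed routing: for each $k$ and each $i\notin\mathcal S_k$ there is a fixed next hop $j_i(k)\in\mathcal N(i)$. For each $v$ and $k$, the path $p_{vk}=(p^1_{vk},\dots,p^{|p_{vk}|}_{vk})$ is defined by $p^1_{vk}=v$, $p^{l+1}_{vk}=j_{p^l_{vk}}(k)$, ending at a node $s_k\in\mathcal S_k$; every such path is assumed loop-free with no intermediate node in $\mathcal S_k$. $(i,j)\in p_{vk}$ means $i,j$ are consecutive on $p_{vk}$; $l_{p_{vk}}(i)$ is the position of $i$ on $p_{vk}$. The link flows are $$f_{ji}(k)=\sum_{v:(i,j)\in p_{vk}}r_v(k)\prod_{l'=1}^{l_{p_{vk}}(i)}\big(1-y_{p^{l'}_{vk}}(k)\big),\qquad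 F_{ji}=\sum_k f_{ji}(k).$$ A function $A$ on a box $[0,1]^n$ is DR-submodular if for all $a\le b$ (coordinatewise), every coordinate vector $e_m$ and every $\epsilon\ge0$ with $a+\epsilon e_m,b+\epsilon e_m$ in the box, $A(a+\epsilon e_m)-A(a)\ge A(b+\epsilon e_m)-A(b)$ (for twice differentiable $A$, equivalently all second partial derivatives are $\le 0$). *)

From HB Require Import structures.
From mathcomp Require Import all_boot all_order all_algebra.
From mathcomp Require Import all_classical all_reals all_analysis.
Unset Printing Implicit Defensive.
Import Order.TTheory GRing.Theory Num.Theory.
Import numFieldNormedType.Exports.
Local Open Scope classical_set_scope.
Local Open Scope ring_scope.

Section Network.
Variable R : realType.

Definition C2_nonneg (f : R -> R) : Prop :=
  forall x : R, 0 <= x ->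
    [/\ derivable f x 1, derivable (derive1 f) x 1 & {for x, continuous (derive1 (derive1 f))}].
Definition incr_nonneg (f : R -> R) : Prop :=
  forall x y : R, 0 <= x -> x <= y -> f x <= f y.
Definition convex_nonneg (f : R -> R) : Prop :=
  forall x y t : R, 0 <= x -> 0 <= y -> 0 <= t -> t <= 1 ->
    f (t * x + (1 - t) * y) <= t * f x + (1 - t) * f y.
Definition cost_fun (f : R -> R) : Prop :=
  [/\ C2_nonneg f, incr_nonneg f, convex_nonneg f & f 0 = 0].

Section Box.
Variable I : finType.
Definition inbox (y : I -> R) : Prop := forall m, 0 <= y m <= 1.
Definition vle (a b : I -> R) : Prop := forall m, a m <= b m.
Definition addcoord (a : I -> R) (m : I) (eps : R) : I -> R :=
  fun m' => a m' + (if m' == m then eps else 0).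
Definition nonneg_on_box (A : (I -> R) -> R) : Prop :=
  forall y, inbox y -> 0 <= A y.
Definition nondecr_on_box (A : (I -> R) -> R) : Prop :=
  forall a b, inbox a -> inbox b -> vle a b -> A a <= A b.
Definition DR_submodular (A : (I -> R) -> R) : Prop :=
  forall a b, inbox a -> inbox b -> vle a b ->
  forall (m : I) (eps : R), 0 <= eps ->
    inbox (addcoord a m eps) -> inbox (addcoord b m eps) ->
    A (addcoord b m eps) - A b <= A (addcoord a m eps) - A a.
Definition convex_on_box (B : (I -> R) -> R) : Prop :=
  forall a b (t : R), inbox a -> inbox b -> 0 <= t -> t <= 1 ->
    B (fun m => t * a m + (1 - t) * b m) <= t * B a + (1 - t) * B b.
End Box.

Variables (V C : finType) (E : rel V) (S : C -> {set V}) (nh : C -> V -> V)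
          (r : V -> C -> R).

Definition Idx := {p : (C * V)%type | p.2 \notin S p.1}.

(* number of hops of p_{vk}: first n with (nh k)^n v \in S_k *)
Definition plen (k : C) (v : V) : nat :=
  find (fun n => iter n (nh k) v \in S k) (iota 0 #|V|).
(* the path p_{vk} = (p^1, ..., p^{|p|}) as a sequence (0-based) *)
Definition pth (k : C) (v : V) : seq V := traject (nh k) v (plen k v).+1.

(* y_i(k), extended by 0 at server pairs (never used there) *)
Definition yext (y : Idx -> R) (k : C) (i : V) : R :=
  if @insub _ (fun p : C * V => p.2 \notin S p.1) Idx (k, i) is Some m
  then y m else 0.

(* f_{ji}(k): (i,j) \in p_{vk} iff (i,j) consecutive on p_{vk};
   l_{p}(i) = index i p + 1 *)
Definition flow (y : Idx -> R) (j i : V) (k : C) : R :=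
  \sum_(v : V)
    (if (i, j) \in zip (pth k v) (behead (pth k v)) then
       r v k * \prod_(l < (index i (pth k v)).+1)
                 (1 - yext y k (nth v (pth k v) l))
     else 0).
Definition Ftot (y : Idx -> R) (j i : V) : R := \sum_(k : C) flow y j i k.

Definition yzero : Idx -> R := fun _ => 0.

Definition Tcost (D : V -> V -> R -> R) (y : Idx -> R) : R :=
  \sum_(e : V * V | E e.1 e.2) D e.1 e.2 (Ftot y e.1 e.2).

Definition Aobj (D : V -> V -> R -> R) (y : Idx -> R) : R :=
  Tcost D yzero - Tcost D y.

Definition Ycache (y : Idx -> R) (i : V) : R :=
  \sum_(m : Idx | (val m).2 == i) y m.

Definition Bobj (Bc : V -> R -> R) (y : Idx -> R) : R :=
  \sum_(i : V) Bc i (Ycache y i).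

End Network.

(* A(y) is T(0) minus a sum of terms D_ij(F_ij(y)), where each link flow F_ij
   is a nonnegative combination of products prod_l (1 - y_l) of complementary
   caching variables along a path.  Such a product is nonnegative, antitone in
   y, and its decrease along a coordinate shrinks as y grows; an increasing
   convex cost D_ij turns these properties of F_ij into the same properties of
   D_ij(F_ij), because a larger decrease of the argument taken from a higher
   point yields a larger decrease of D_ij.  B is convex because each Y_i is
   linear in y. *)
From HB Require Import structures.
From mathcomp Require Import all_boot all_order all_algebra.
From mathcomp Require Import all_classical all_reals all_analysis.
From mathcomp Require Import ring lra.
Import Order.TTheory GRing.Theory Num.Theory.
Local Open Scope ring_scope.

Set Implicit Arguments.
Unset Strict Implicit.

Section ConvexIncrements.
Variable R : realType.

Lemma convex_nonneg_increment_mono (f : R -> R) : convex_nonneg R f ->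
  forall x y d, 0 <= x -> x <= y -> 0 <= d -> f (x + d) - f x <= f (y + d) - f y.
Proof.
move=> cvx x y d x0 xy d0.
have [->|dn0] := eqVneq d 0; first by rewrite !addr0 !subrr.
have dp : 0 < d by rewrite lt_def dn0 d0.
have hn : y + d - x != 0 by rewrite gt_eqF //; lra.
(* both x + d and y lie on the segment [x, y + d], with complementary weights *)
set t := d / (y + d - x).
have t0 : 0 <= t by apply: divr_ge0; lra.
have t1 : t <= 1 by rewrite /t ler_pdivrMr ?mul1r; lra.
have ey : t * x + (1 - t) * (y + d) = y by rewrite /t; field.
have exd : (1 - t) * x + (1 - (1 - t)) * (y + d) = x + d by rewrite /t; field.
have hy := cvx x (y + d) t x0 ltac:(lra) t0 t1.
have hxd := cvx x (y + d) (1 - t) x0 ltac:(lra) ltac:(lra) ltac:(lra).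
rewrite ey in hy; rewrite exd (_ : 1 - (1 - t) = t) in hxd; last by ring.
lra.
Qed.

Lemma cost_fun_increment_le (f : R -> R) : cost_fun R f ->
  forall u v h k, 0 <= u -> u <= v -> 0 <= h -> h <= k ->
  f (u + h) - f u <= f (v + k) - f v.
Proof.
case=> _ incr cvx _ u v h k u0 uv h0 hk.
have := @convex_nonneg_increment_mono f cvx u v h u0 uv h0.
have := incr (v + h) (v + k) ltac:(lra) ltac:(lra).
lra.
Qed.

End ConvexIncrements.

Section ComplementProducts.
Variable R : realType.
Implicit Types (x y d : nat -> R) (n : nat).

Lemma prod_subr_ge0 n x : (forall l, x l <= 1) -> 0 <= \prod_(l < n) (1 - x l).
Proof. by move=> x1; apply: prodr_ge0 => l _; rewrite subr_ge0. Qed.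

Lemma prod_subr_antitone n x y : (forall l, x l <= y l) -> (forall l, y l <= 1) ->
  \prod_(l < n) (1 - y l) <= \prod_(l < n) (1 - x l).
Proof.
move=> xy y1; apply: ler_prod => l _.
by have := xy l; have := y1 l; move=> ? ?; apply/andP; split; lra.
Qed.

Lemma prod_subr_decrease_antitone n x y d :
  (forall l, 0 <= x l) -> (forall l, x l <= y l) ->
  (forall l, 0 <= d l) -> (forall l, y l + d l <= 1) ->
  \prod_(l < n) (1 - y l) - \prod_(l < n) (1 - (y l + d l)) <=
  \prod_(l < n) (1 - x l) - \prod_(l < n) (1 - (x l + d l)).
Proof.
elim: n x y d => [|n IH] x y d x0 xy d0 yd1; first by rewrite !big_ord0 !subrr.
have yyd l : y l <= y l + d l by rewrite lerDl.
have := IH (fun l => x l.+1) (fun l => y l.+1) (fun l => d l.+1)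
  (fun l => x0 l.+1) (fun l => xy l.+1) (fun l => d0 l.+1) (fun l => yd1 l.+1).
have := @prod_subr_antitone n (fun l => y l.+1) (fun l => y l.+1 + d l.+1)
  (fun l => yyd l.+1) (fun l => yd1 l.+1).
have := @prod_subr_antitone n (fun l => x l.+1 + d l.+1)
  (fun l => y l.+1 + d l.+1) (fun l => lerD (xy l.+1) (lexx _)) (fun l => yd1 l.+1).
have := @prod_subr_ge0 n (fun l => y l.+1 + d l.+1) (fun l => yd1 l.+1).
rewrite !big_ord_recl /=.
set Qx := \prod_(i < n) (1 - x i.+1); set Qy := \prod_(i < n) (1 - y i.+1).
set Qxd := \prod_(i < n) (1 - (x i.+1 + d i.+1)).
set Qyd := \prod_(i < n) (1 - (y i.+1 + d i.+1)).
move=> Qyd0 Qyd_le_Qxd Qyd_le_Qy dQ.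
have := x0 0; have := xy 0; have := d0 0; have := yd1 0; move=> ? ? ? ?.
(* (1 - x0) Q x - (1 - x0 - d0) Q (x + d) = (1 - x0) (Q x - Q (x + d)) + d0 Q (x + d) *)
have p1 : 0 <= (y 0 - x 0) * (Qy - Qyd) by apply: mulr_ge0; lra.
have p2 : 0 <= (1 - x 0) * ((Qx - Qxd) - (Qy - Qyd)) by apply: mulr_ge0; lra.
have p3 : 0 <= d 0 * (Qxd - Qyd) by apply: mulr_ge0; lra.
nra.
Qed.

End ComplementProducts.

Section Network.
Variables (R : realType) (V C : finType) (S : C -> {set V}) (nh : C -> V -> V)
  (r : V -> C -> R).
Hypothesis r_ge0 : forall v k, 0 <= r v k.

Local Notation I := (Idx V C S).
Local Notation inbox := (inbox R I).
Local Notation vle := (vle R I).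
Local Notation addcoord := (addcoord R I).
Local Notation yzero := (yzero R V C S).
Local Notation yext := (yext R V C S).
Local Notation flow := (flow R V C S nh r).
Local Notation Ftot := (Ftot R V C S nh r).

Lemma vle_addcoord (a : I -> R) m eps : 0 <= eps -> vle a (addcoord a m eps).
Proof. by move=> eps0 m'; rewrite /addcoord lerDl; case: eqP. Qed.

Lemma vle_addcoord2 (a b : I -> R) m eps :
  vle a b -> vle (addcoord a m eps) (addcoord b m eps).
Proof. by move=> ab m'; rewrite /addcoord lerD2r. Qed.

Lemma yext_box (y : I -> R) k i : inbox y -> 0 <= yext y k i <= 1.
Proof. by rewrite /yext => hy; case: insub => [m|] //; rewrite lexx ler01. Qed.

Lemma yext_le (a b : I -> R) k i : vle a b -> yext a k i <= yext b k i.
Proof. by rewrite /yext => ab; case: insub. Qed.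

Lemma yext_addcoord (y : I -> R) m eps k i :
  yext (addcoord y m eps) k i = yext y k i + yext (addcoord yzero m eps) k i.
Proof. by rewrite /yext /addcoord /yzero; case: insub => [m'|]; rewrite ?addr0 ?add0r. Qed.

Lemma yext_addcoord_ge0 m eps k i : 0 <= eps -> 0 <= yext (addcoord yzero m eps) k i.
Proof.
by rewrite /yext /addcoord /yzero => eps0; case: insub => [m'|] //; rewrite add0r; case: eqP.
Qed.

Lemma flow_ge0 (y : I -> R) j i k : inbox y -> 0 <= flow y j i k.
Proof.
move=> hy; apply: sumr_ge0 => v _; case: ifP => // _.
apply: mulr_ge0 => //.
apply: (@prod_subr_ge0 R _ (fun l => yext y k (nth v (pth V C S nh k v) l))) => l.
by case/andP: (yext_box k (nth v (pth V C S nh k v) l) hy).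
Qed.

Lemma flow_antitone (a b : I -> R) j i k : inbox b -> vle a b -> flow b j i k <= flow a j i k.
Proof.
move=> hb ab; apply: ler_sum => v _; case: ifP => // _.
apply: ler_wpM2l => //.
apply: (@prod_subr_antitone R _ (fun l => yext a k (nth v (pth V C S nh k v) l))
  (fun l => yext b k (nth v (pth V C S nh k v) l))) => l; first exact: yext_le.
by case/andP: (yext_box k (nth v (pth V C S nh k v) l) hb).
Qed.

Lemma flow_decrease_antitone (a b : I -> R) m eps j i k :
  inbox a -> vle a b -> 0 <= eps -> inbox (addcoord b m eps) ->
  flow b j i k - flow (addcoord b m eps) j i k <= flow a j i k - flow (addcoord a m eps) j i k.
Proof.
move=> ha ab eps0 hb'; rewrite /flow -!sumrB; apply: ler_sum => v _.
case: ifP => _; last by rewrite !subrr.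
rewrite -!mulrBr; apply: ler_wpM2l => //.
set p := pth V C S nh k v; set d := yext (addcoord yzero m eps) k.
have shift (y : I -> R) :
    \prod_(l < (index i p).+1) (1 - yext (addcoord y m eps) k (nth v p l))
    = \prod_(l < (index i p).+1) (1 - (yext y k (nth v p l) + d (nth v p l))).
  by apply: eq_bigr => l _; rewrite yext_addcoord.
rewrite !shift; apply: (@prod_subr_decrease_antitone R _ (fun l => yext a k (nth v p l))
  (fun l => yext b k (nth v p l)) (fun l => d (nth v p l))) => l.
- by case/andP: (yext_box k (nth v p l) ha).
- exact: yext_le.
- exact: yext_addcoord_ge0.
- by rewrite -yext_addcoord; case/andP: (yext_box k (nth v p l) hb').
Qed.

Lemma Ftot_ge0 (y : I -> R) j i : inbox y -> 0 <= Ftot y j i.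
Proof. by move=> hy; apply: sumr_ge0 => k _; apply: flow_ge0. Qed.

Lemma Ftot_antitone (a b : I -> R) j i : inbox b -> vle a b -> Ftot b j i <= Ftot a j i.
Proof. by move=> hb ab; apply: ler_sum => k _; apply: flow_antitone. Qed.

Lemma Ftot_decrease_antitone (a b : I -> R) m eps j i :
  inbox a -> vle a b -> 0 <= eps -> inbox (addcoord b m eps) ->
  Ftot b j i - Ftot (addcoord b m eps) j i <= Ftot a j i - Ftot (addcoord a m eps) j i.
Proof.
by move=> *; rewrite /Ftot -!sumrB; apply: ler_sum => k _; apply: flow_decrease_antitone.
Qed.

Variables (E : rel V) (D : V -> V -> R -> R) (Bc : V -> R -> R).
Hypothesis D_cost : forall i j, E i j -> cost_fun R (D i j).
Hypothesis B_cost : forall i, cost_fun R (Bc i).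

Local Notation Tcost := (Tcost R V C E S nh r D).
Local Notation Ycache := (Ycache R V C S).

Lemma Tcost_antitone (a b : I -> R) : inbox b -> vle a b -> Tcost b <= Tcost a.
Proof.
move=> hb ab; apply: ler_sum => e /D_cost[_ D_incr _ _].
by apply: D_incr; [exact: Ftot_ge0 | exact: Ftot_antitone].
Qed.

Lemma Tcost_decrease_antitone (a b : I -> R) m eps :
  inbox a -> vle a b -> 0 <= eps -> inbox (addcoord b m eps) ->
  Tcost b - Tcost (addcoord b m eps) <= Tcost a - Tcost (addcoord a m eps).
Proof.
move=> ha ab eps0 hb'; rewrite /Tcost -!sumrB; apply: ler_sum => e /D_cost De.
set Fb' := Ftot (addcoord b m eps) e.1 e.2; set Fa' := Ftot (addcoord a m eps) e.1 e.2.
have := @cost_fun_increment_le R _ De Fb' Fa' (Ftot b e.1 e.2 - Fb') (Ftot a e.1 e.2 - Fa').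
rewrite !subrKC; apply.
- exact: Ftot_ge0.
- exact/Ftot_antitone/vle_addcoord2.
- by rewrite subr_ge0; apply/Ftot_antitone/vle_addcoord.
- exact: Ftot_decrease_antitone.
Qed.

Lemma Ycache_ge0 (y : I -> R) i : inbox y -> 0 <= Ycache y i.
Proof. by move=> hy; apply: sumr_ge0 => m _; case/andP: (hy m). Qed.

Lemma Ycache_convex_comb (a b : I -> R) t i :
  Ycache (fun m => t * a m + (1 - t) * b m) i = t * Ycache a i + (1 - t) * Ycache b i.
Proof. by rewrite /Ycache big_split /= -!mulr_sumr. Qed.

Lemma Bobj_convex : convex_on_box R I (Bobj R V C S Bc).
Proof.
move=> a b t ha hb t0 t1; rewrite /Bobj !mulr_sumr -big_split /=.
apply: ler_sum => i _; rewrite Ycache_convex_comb.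
by case: (B_cost i) => _ _ B_cvx _; apply: B_cvx => //; exact: Ycache_ge0.
Qed.

End Network.

Unset Implicit Arguments.

Theorem lemma1 (R : realType) (V C : finType) (E : rel V)
  (S : C -> {set V}) (nh : C -> V -> V) (r : V -> C -> R)
  (D : V -> V -> R -> R) (Bc : V -> R -> R)
  (hEsym : forall i j, E i j -> E j i)
  (hSne : forall k, S k != finset.set0)
  (hr : forall v k, 0 <= r v k)
  (hnh : forall k i, i \notin S k -> E i (nh k i))
  (hpath_end : forall k v, last v (pth V C S nh k v) \in S k)
  (hpath_loopfree : forall k v, uniq (pth V C S nh k v))
  (hD : forall i j, E i j -> cost_fun R (D i j))
  (hB : forall i, cost_fun R (Bc i)) :
  [/\ nonneg_on_box R (Idx V C S) (Aobj R V C E S nh r D),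
      nondecr_on_box R (Idx V C S) (Aobj R V C E S nh r D),
      DR_submodular R (Idx V C S) (Aobj R V C E S nh r D)
    & convex_on_box R (Idx V C S) (Bobj R V C S Bc)].
Proof.
have T_antitone := Tcost_antitone nh hr hD.
split; rewrite /Aobj.
- move=> y hy; rewrite subr_ge0; apply: T_antitone => // m.
  by case/andP: (hy m).
- by move=> a b _ hb ab; rewrite lerD2l lerN2; apply: T_antitone.
- move=> a b ha _ ab m eps eps0 _ hb'.
  have := Tcost_decrease_antitone nh hr hD ha ab eps0 hb'; lra.
- exact: Bobj_convex hB.
Qed.
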